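(* Let $\Bbbk$ be a field, $\mathcal A$ a $\Bbbk$-algebra, and $f(t)=1+\sum_{k\ge 1}a_kt^k\in\Bbbk[[t]]$ with $a_k\ne 0$ for all $k\ge 1$. For $k\ge 1$ let $P_{f,k}(t)$ be the polynomial $$P_{f,k}(t)=(-1)^k\det\begin{pmatrix} 1&a_1t&a_2t^2&\ldots &a_kt^k\\ 1&a_1&a_2&\ldots &a_k\\ 0&1&a_1&\ldots &a_{k-1}\\ \vdots&\vdots&\ddots&\ddots&\vdots\\ 0&0&\ldots &1&a_1 \end{pmatrix},$$ and let ${\bf q}_k=\{q_{1k},\dots,q_{kk}\}$ be its roots (with multiplicity, in an algebraic closure of $\Bbbk$). Then for all $x,y\in\mathcal A$, $$f(x)\,y\,f(x)^{-1}=y+\sum_{k\ge 1}a_k\,(\mathrm{ad}\,x)^{{\bf q}_k}(y).$$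
   Context: For $q\in\Bbbk$ put $[a,b]_q=ab-qba$. For ${\bf q}=\{q_1,\dots,q_k\}$, $(\mathrm{ad}\,x)^{\bf q}(y)=[x,[x,\ldots,[x,y]_{q_1},\ldots]_{q_{k-1}}]_{q_k}$, which equals $\sum_{j=0}^k(-1)^je_j(q_1,\dots,q_k)\,x^{k-j}yx^j$ ($e_j$ the $j$-th elementary symmetric function); since the elementary symmetric functions of the roots of $P_{f,k}$ lie in $\Bbbk$, this operator is defined over $\Bbbk$. The infinite sums are understood formally: e.g. replace $x$ by $\tau x$ for a formal variable $\tau$, so that both sides are identities in $\mathcal A[[\tau]]$ (the $k$-th term acquiring the factor $\tau^k$). *)

From HB Require Import structures.
From mathcomp Require Import all_boot all_order all_algebra.
Set Implicit Arguments. Unset Strict Implicit. Unset Printing Implicit Defensive.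
Import GRing.Theory.
Local Open Scope ring_scope.

(* The (n+1)x(n+1) matrix defining P_{f,n}; the coefficient sequence of f is
   a : nat -> k with a 0 = 1.  Row 0 is (1, a1 t, ..., an t^n); row i >= 1 is
   (0,...,0, a_0 = 1, a_1, ..., a_{n-i+1}) starting at column i-1. *)
Definition Pmat (k : fieldType) (a : nat -> k) (n : nat) : 'M[{poly k}]_(n.+1) :=
  \matrix_(i < n.+1, j < n.+1)
    if (i == 0 :> nat) then (a j)%:P * 'X^j
    else if (i.-1 <= j)%N then (a (j - i.-1)%N)%:P else 0.

Definition Pfk (k : fieldType) (a : nat -> k) (n : nat) : {poly k} :=
  (-1) ^+ n * \det (Pmat a n).

Definition elsym (L : comNzRingType) (n : nat) (s : 'I_n -> L) (j : nat) : L :=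
  \sum_(I : {set 'I_n} | #|I| == j) \prod_(i in I) s i.

(* (ad x)^{q}(y) = sum_j (-1)^j e_j x^{n-j} y x^j, with c j = e_j (in k) *)
Definition adq (k : fieldType) (A : algType k) (c : nat -> k) (n : nat) (x y : A) : A :=
  \sum_(j < n.+1) (((-1) ^+ j * c j) *: (x ^+ (n - j) * y * x ^+ j)).

(* Formal power series in tau over a ring A, as coefficient sequences. *)
Definition sermul (A : pzRingType) (F G : nat -> A) : nat -> A :=
  fun n => \sum_(i < n.+1) F i * G (n - i)%N.
Definition serC (A : pzRingType) (y : A) : nat -> A :=
  fun n => if n == 0%N then y else 0.
(* f(tau x) = sum_n a_n x^n tau^n *)
Definition subst_ser (k : fieldType) (A : algType k) (a : nat -> k) (x : A) : nat -> A :=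
  fun n => a n *: x ^+ n.

(* With g := 1/f, the right inverse of f(x) is g(x), so the coefficient of
   tau^n in f(x) y f(x)^-1 is sum_(i+j=n) a_i g_j x^i y x^j.  The column
   (g_n, ..., g_0) is killed by every row of the matrix defining P_{f,n} but
   the first, so Cramer's rule gives P_{f,n}(t) = sum_m a_m g_(n-m) t^m.
   Comparing coefficients with a_n prod_i (t - q_i) yields
   a_(n-j) g_j = (-1)^j a_n e_j(q), which is the claim. *)

From HB Require Import structures.
From mathcomp Require Import all_boot all_order all_algebra zify.
Set Implicit Arguments. Unset Strict Implicit. Unset Printing Implicit Defensive.
Import GRing.Theory.
Local Open Scope ring_scope.

Lemma coef_prod_XsubC_elsym (R : comNzRingType) n (s : 'I_n -> R) m :
  (m <= n)%N ->
  (\prod_(i < n) ('X - (s i)%:P))`_m = (-1) ^+ (n - m) * elsym s (n - m).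
Proof.
pose ps := [seq s i | i <- enum 'I_n].
have sE i : s i = ps`_i by rewrite (nth_map i) ?nth_ord_enum ?size_enum_ord.
have size_ps : size ps = n by rewrite size_map size_enum_ord.
rewrite /elsym; under eq_bigr do rewrite sE.
under [in RHS]eq_bigr do under eq_bigr do rewrite sE.
clearbody ps; clear sE s; case: n / size_ps => nle.
by rewrite -coef_prod_XsubC // (big_nth 0) big_mkord.
Qed.

Lemma elsym0 (R : comNzRingType) n (s : 'I_n -> R) : elsym s 0 = 1.
Proof.
rewrite /elsym (big_pred1 set0) ?big_set0 // => I.
by rewrite cards_eq0.
Qed.

Lemma eq_sermul (A : pzRingType) (F F' G G' : nat -> A) :
  F =1 F' -> G =1 G' -> sermul F G =1 sermul F' G'.
Proof. by move=> eqF eqG n; apply: eq_bigr => i _; rewrite eqF eqG. Qed.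

Lemma sermul_lregl_inj (A : pzRingType) (F G H : nat -> A) :
  GRing.lreg (F 0%N) -> sermul F G =1 sermul F H -> G =1 H.
Proof.
move=> regF0 eqFGH; elim/ltn_ind=> n IH; apply: regF0.
have := eqFGH n; rewrite /sermul !big_ord_recl !subn0.
have eq_tail : \sum_(i < n) F (bump 0 i) * G (n - bump 0 i)%N
              = \sum_(i < n) F (bump 0 i) * H (n - bump 0 i)%N.
  by apply: eq_bigr => i _; rewrite IH // /bump add1n; have := ltn_ord i; lia.
by rewrite eq_tail => /addIr.
Qed.

Lemma sermul_subst_ser (k : fieldType) (A : algType k) (a b : nat -> k) (x : A) :
  sermul (subst_ser a x) (subst_ser b x) =1 subst_ser (sermul a b) x.
Proof.
move=> n; rewrite /sermul /subst_ser scaler_suml; apply: eq_bigr => i _.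
by rewrite -scalerAl -scalerAr scalerA -exprD subnKC // -ltnS.
Qed.

Lemma subst_ser_serC1 (k : fieldType) (A : algType k) (x : A) :
  subst_ser (serC 1) x =1 serC 1.
Proof. by case=> [|n]; rewrite /subst_ser /serC /= ?scale1r ?scale0r. Qed.

Lemma sermul_serC (A : pzRingType) (F : nat -> A) y n :
  sermul F (serC y) n = F n * y.
Proof.
rewrite /sermul big_ord_recr /= subnn big1 ?add0r // => i _.
by rewrite /serC subn_eq0 leqNgt ltn_ord mulr0.
Qed.

Lemma sermul_subn (R : pzRingType) (F G : nat -> R) m p : (p <= m)%N ->
  \sum_(j < m.+1 | (p <= j)%N) F (j - p)%N * G (m - j)%N = sermul F G (m - p).
Proof.
move=> le_pm.
rewrite -(big_geq_mkord _ _ xpredT (fun j => F (j - p)%N * G (m - j)%N)).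
rewrite -{1}[p]add0n big_addn subSn // big_mkord; apply: eq_bigr => l _.
by rewrite addnK subnDA subnAC.
Qed.

Lemma sermul_conj_subst_ser (k : fieldType) (A : algType k) (a b : nat -> k)
    (x y : A) n :
  sermul (sermul (subst_ser a x) (serC y)) (subst_ser b x) n =
  \sum_(i < n.+1) (a i * b (n - i)%N) *: (x ^+ i * y * x ^+ (n - i)).
Proof.
apply: eq_bigr => i _; rewrite sermul_serC /subst_ser.
by rewrite -!scalerAl -scalerAr scalerA.
Qed.

Section InverseSeries.
Variables (R : pzRingType) (a : nat -> R).

Fixpoint inv_coef_fuel (fuel n : nat) : R :=
  if fuel is fuel'.+1 then
    if n is n'.+1 then - \sum_(i < n) a i.+1 * inv_coef_fuel fuel' (n' - i)
    else 1
  else 1.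

Definition inv_coef (n : nat) : R := inv_coef_fuel n n.

Lemma inv_coef_fuelS fuel n :
  inv_coef_fuel fuel.+1 n.+1 = - \sum_(i < n.+1) a i.+1 * inv_coef_fuel fuel (n - i).
Proof. by []. Qed.

Lemma inv_coef_fuelE fuel n : (n <= fuel)%N -> inv_coef_fuel fuel n = inv_coef n.
Proof.
elim/ltn_ind: n fuel => [[|n] IH] [|fuel] // n_le_fuel.
rewrite /inv_coef !inv_coef_fuelS; congr (- _).
by apply: eq_bigr => i _; rewrite !IH // ?leq_subr //; lia.
Qed.

Lemma inv_coef0 : inv_coef 0 = 1. Proof. by []. Qed.

Lemma inv_coefS n : inv_coef n.+1 = - \sum_(i < n.+1) a i.+1 * inv_coef (n - i).
Proof.
rewrite {1}/inv_coef inv_coef_fuelS; congr (- _); apply: eq_bigr => i _.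
by rewrite inv_coef_fuelE // leq_subr.
Qed.

Lemma sermul_inv_coef : a 0%N = 1 -> sermul a inv_coef =1 serC 1.
Proof.
move=> a0 [|n]; rewrite /sermul /serC big_ord_recl a0 mul1r //=.
by rewrite big_ord0 addr0.
by rewrite inv_coefS addNr.
Qed.

End InverseSeries.

Lemma subst_ser_inv_coef (k : fieldType) (A : algType k) (a : nat -> k) (x : A)
    (G : nat -> A) :
  a 0%N = 1 -> sermul (subst_ser a x) G =1 serC 1 -> G =1 subst_ser (inv_coef a) x.
Proof.
move=> a0 G_rinv; apply: (@sermul_lregl_inj _ (subst_ser a x)).
  by rewrite /subst_ser a0 scale1r; exact: lreg1.
move=> n; rewrite G_rinv sermul_subst_ser -(subst_ser_serC1 x) /subst_ser.
by rewrite sermul_inv_coef.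
Qed.

Lemma det_mulmx_delta (R : comNzRingType) n (M : 'M[R]_n) (w : 'cV_n) (p : R) i j :
  M *m w = p *: delta_mx i 0 -> \det M * w j 0 = p * cofactor M i j.
Proof.
move=> /(congr1 (mulmx (\adj M))); rewrite mulmxA mul_adj_mx mul_scalar_mx.
by rewrite -scalemxAr -colE => /matrixP/(_ j 0); rewrite !mxE.
Qed.

Section PmatInverse.
Variables (k : fieldType) (a : nat -> k) (n : nat).
Hypothesis a0 : a 0%N = 1.

Lemma cofactor_Pmat : cofactor (Pmat a n) 0 ord_max = (-1) ^+ n.
Proof.
rewrite /cofactor add0n -det_tr det_trig ?big1 ?mulr1 // => [i _|].
  by rewrite !mxE lift0 lift_max /= leqnn subnn a0.
by apply/is_trig_mxP => i j ltij; rewrite !mxE lift0 lift_max /= leqNgt ltij.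
Qed.

Lemma Pmat_mul_inv_coef :
  Pmat a n *m \col_j (inv_coef a (n - j))%:P =
  \poly_(m < n.+1) (a m * inv_coef a (n - m)) *: delta_mx 0 0.
Proof.
apply/matrixP => i j0; rewrite !mxE [j0]ord1 eqxx andbT.
case: eqVneq => [-> | i_neq0].
  rewrite mulr1 poly_def; apply: eq_bigr => j _.
  by rewrite !mxE -mul_polyC polyCM mulrAC.
rewrite mulr0; case: i i_neq0 => [[|p] //= p_lt_n] _.
transitivity ((sermul a (inv_coef a) (n - p))%:P); last first.
  by rewrite sermul_inv_coef // /serC subn_eq0 leqNgt -ltnS p_lt_n.
rewrite -(@sermul_subn _ _ _ n p (ltnW p_lt_n)) [RHS]rmorph_sum [RHS]big_mkcond.
by apply: eq_bigr => j _; rewrite !mxE /=; case: ifP; rewrite ?mul0r ?polyCM.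
Qed.

Lemma Pfk_inv_coef : Pfk a n = \poly_(m < n.+1) (a m * inv_coef a (n - m)).
Proof.
have := det_mulmx_delta ord_max Pmat_mul_inv_coef.
rewrite !mxE subnn mulr1 cofactor_Pmat /Pfk => ->.
by rewrite [_ * (-1) ^+ n]mulrC signrMK.
Qed.

End PmatInverse.

Lemma Pfk_roots_elsym (k : fieldType) (a : nat -> k) (L : comNzRingType)
    (iota : {rmorphism k -> L}) n (s : 'I_n -> L) (e : nat -> k) :
  a 0%N = 1 ->
  map_poly iota (Pfk a n) =
    lead_coef (map_poly iota (Pfk a n)) *: \prod_(i < n) ('X - (s i)%:P) ->
  (forall j, (j <= n)%N -> iota (e j) = elsym s j) ->
  forall j, (j <= n)%N -> a n * ((-1) ^+ j * e j) = a (n - j)%N * inv_coef a j.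
Proof.
move=> a0 Pfk_split e_elsym j le_jn.
set lc := lead_coef _ in Pfk_split.
have coef_Pfk m : (m <= n)%N ->
    iota (a m * inv_coef a (n - m)) = lc * ((-1) ^+ (n - m) * elsym s (n - m)).
  move=> le_mn; rewrite -coef_prod_XsubC_elsym // -coefZ -Pfk_split.
  by rewrite coef_map Pfk_inv_coef // coef_poly ltnS le_mn.
have lcE : lc = iota (a n).
  by have := coef_Pfk n (leqnn n); rewrite subnn elsym0 !mulr1 => <-.
apply: (fmorph_inj iota); have := coef_Pfk _ (leq_subr j n).
by rewrite subKn // lcE => ->; rewrite -e_elsym // !rmorphM rmorph_sign.
Qed.

Theorem theorem1p2 (k : fieldType) (A : algType k) (a : nat -> k)
  (a0 : a 0%N = 1) (anz : forall n, (0 < n)%N -> a n != 0)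
  (L : closedFieldType) (iota : {rmorphism k -> L})
  (q : forall n : nat, 'I_n -> L)
  (hq : forall n, (0 < n)%N ->
     map_poly iota (Pfk a n) =
       lead_coef (map_poly iota (Pfk a n)) *: \prod_(i < n) ('X - (q n i)%:P))
  (c : nat -> nat -> k)
  (hc : forall n j, (0 < n)%N -> (j <= n)%N -> iota (c n j) = elsym (q n) j)
  (x y : A) (G : nat -> A)
  (hG1 : sermul (subst_ser a x) G = serC 1)
  (hG2 : sermul G (subst_ser a x) = serC 1) :
  forall n : nat,
    sermul (sermul (subst_ser a x) (serC y)) G n =
    (if n == 0%N then y else a n *: adq (c n) n x y).
Proof.
have G_inv_coef := subst_ser_inv_coef a0 (fun n => congr1 (@^~ n) hG1).
move=> n; rewrite (eq_sermul (frefl _) G_inv_coef) sermul_conj_subst_ser.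
case: n => [|n] /=.
  by rewrite big_ord1 a0 inv_coef0 mulr1 scale1r !expr0 mul1r mulr1.
rewrite /adq scaler_sumr (reindex_inj rev_ord_inj); apply: eq_bigr => i _ /=.
have le_in := leq_ord i.
by rewrite scalerA (Pfk_roots_elsym a0 (hq n.+1 isT) (fun j => hc n.+1 j isT))
  ?subKn.
Qed.
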